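(* Consider NSGA-III (as defined in the context) on an arbitrary $m$-objective function $f:\{0,1\}^n\to\mathbb N_0^m$ with $\varepsilon_{\mathrm{nad}}\ge f_{\max}$ and reference set $\mathcal R_p$ with $p\ge 2m^{3/2}f_{\max}$, any population size, any initial population and any rule for choosing the extreme points. Then in every generation $t$, any two search points in $F^1_t$ that are associated with the same reference point of $\mathcal R_p$ have the same fitness vector.
   Context: Let $f=(f_1,\dots,f_m):\{0,1\}^n\to\mathbb N_0^m$ be an $m$-objective function to be maximized, and $f_{\max}:=\max\{f_j(x): x\in\{0,1\}^n, j\in[m]\}$, assumed $\ge 1$. For $x,y\in\{0,1\}^n$: $x\succeq y$ ($x$ weakly dominates $y$) iff $f_j(x)\ge f_j(y)$ for all $j$; $x\succ y$ iff $x\succeq y$ and $f_j(x)>f_j(y)$ for some $j$; $x,y$ are incomparable if neither $x\succeq y$ nor $y\succeq x$. For $p\in\mathbb N$ the reference set is $\mathcal R_p=\{(a_1/p,\dots,a_m/p): (a_1,\dots,a_m)\in\mathbb N_0^m,\ \sum_i a_i=p\}$. NSGA-III with population size $\mu$, threshold $\varepsilon_{\mathrm{nad}}>0$ and reference set $\mathcal R_p$: start with a population $P_0$ (a multiset of $\mu$ bit strings; arbitrary), $E_0=\{(-\infty,\dots,-\infty)\}$, $y^{\max}=(-\infty,\dots,-\infty)$, $y^{\min}=(+\infty,\dots,+\infty)$. In generation $t=0,1,2,\dots$: (1) Offspring: $Q_t$ consists of $\mu$ offspring, each created independently by choosing a parent uniformly at random from $P_t$ and flipping each of its bits independently with probability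 $1/n$. (2) Sorting: $R_t=P_t\cup Q_t$ (multiset of size $2\mu$) is partitioned into layers $F^1_t,\dots,F^k_t$, where $F^1_t$ consists of the members of $R_t$ not dominated (w.r.t. $\succ$) by any member of $R_t$, and $F^i_t$ consists of the members of $R_t\setminus(F^1_t\cup\dots\cup F^{i-1}_t)$ not dominated by any member of that set. Let $i^*$ be the index with $\sum_{i<i^*}|F^i_t|<\mu\le\sum_{i\le i^*}|F^i_t|$, and $Y_t=\bigcup_{i<i^*}F^i_t$. (3) Normalization: for each $j$, set $y^{\min}_j\leftarrow\min(y^{\min}_j,\min_{x\in R_t}f_j(x))$ and $y^{\max}_j\leftarrow\max(y^{\max}_j,\max_{x\in F^1_t}f_j(x))$ (so these are running extremes over all generations so far), and choose an extreme point $e^{(j)}\in f(Y_t\cup F^{i^*}_t)\cup E_t$ by some fixed rule (originally via an achievement scalarization function); set $E_{t+1}=\{e^{(1)},\dots,e^{(m)}\}$. If $e^{(1)},\dots,e^{(m)}$ are linearly independent, let $H$ be the affine hyperplane through them; if for every $j$ the hyperplane $H$ meets the $j$-th coordinate axis in exactly one point $I_j u_j$ ($u_j$ the $j$-th unit vector) with $\varepsilon_{\mathrm{nad}}\le I_j\le y^{\max}_j$, set $y^{\mathrm{nad}}_j=I_j$ for all $j$. Otherwise (including linear dependence) set $y^{\mathrm{nad}}_j=\max_{x\in F^1_t}f_j(x)$ for all $j$. Afterwards, for every $j$ with $y^{\mathrm{nad}}_j<y^{\min}_j+\varepsilon_{\mathrm{nad}}$, reset $y^{\mathrm{nad}}_j=\max_{x\in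 R_t}f_j(x)$. The normalized objectives are $f^n_j(x)=(f_j(x)-y^{\min}_j)/(y^{\mathrm{nad}}_j-y^{\min}_j)$ (with the convention $f^n_j(x):=0$ if the denominator is $0$), $f^n=(f^n_1,\dots,f^n_m)$. (4) Association: each $x\in Y_t\cup F^{i^*}_t$ is associated with a reference point $\mathrm{rp}(x)\in\mathcal R_p$ minimizing the Euclidean distance from $f^n(x)$ to the line $\{\lambda r:\lambda\in\mathbb R\}$ (equivalently, minimizing the angle between $f^n(x)$ and $r$); ties are broken by a deterministic rule depending only on $f^n(x)$. (5) Selection: let $\rho_r=|\{x\in Y_t:\mathrm{rp}(x)=r\}|$ for $r\in\mathcal R_p$, $\tilde F=\emptyset$, $R'=\mathcal R_p$. Repeat: choose $r\in R'$ with minimal $\rho_r$ (ties uniformly at random); if some $x\in F^{i^*}_t\setminus\tilde F$ has $\mathrm{rp}(x)=r$, add to $\tilde F$ such an $x$ minimizing the distance between $f^n(x)$ and $r$ (ties uniformly at random), increase $\rho_r$ by one, and stop as soon as $|Y_t|+|\tilde F|=\mu$; otherwise remove $r$ from $R'$. Set $P_{t+1}=Y_t\cup\tilde F$. *)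

From HB Require Import structures.
From mathcomp Require Import all_boot all_order all_algebra.
Set Implicit Arguments. Unset Strict Implicit. Unset Printing Implicit Defensive.
Import Order.TTheory GRing.Theory Num.Theory.
Local Open Scope ring_scope.

Section NSGA3.
Context (R : rcfType) (n m : nat) (f : {ffun 'I_n -> bool} -> 'I_m -> nat).
Context (mu p : nat) (eps : R).

Definition bs := {ffun 'I_n -> bool}.
Definition bs0 : bs := [ffun _ => false].

Definition fmax : nat := (\max_(x : bs) \max_(j < m) f x j)%N.

Definition wdom (x y : bs) : bool := [forall j, (f y j <= f x j)%N].
Definition sdom (x y : bs) : bool := wdom x y && [exists j, (f y j < f x j)%N].

(* R_t = P_t \cup Q_t as a multiset, indexed by 'I_(mu + mu) *)
Definition Iidx := 'I_(mu + mu).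
Definition Rpop (P Q : seq bs) (i : Iidx) : bs := nth bs0 (P ++ Q) i.

(* non-dominated sorting: layer g k is F^(k+1) *)
Definition nondom (g : Iidx -> bs) (S : {set Iidx}) : {set Iidx} :=
  [set i in S | [forall k in S, ~~ sdom (g k) (g i)]].
Definition remaining (g : Iidx -> bs) (k : nat) : {set Iidx} :=
  iter k (fun S => S :\: nondom g S) [set: Iidx].
Definition layer (g : Iidx -> bs) (k : nat) : {set Iidx} :=
  nondom g (remaining g k).
Definition below (g : Iidx -> bs) (k : nat) : {set Iidx} :=
  \bigcup_(k' < k) layer g k'.
(* k is (i star) - 1 (0-based index of the critical layer F^(i star)); then
   Y_t = below g k and F^(i star)_t = layer g k *)
Definition is_istar (g : Iidx -> bs) (k : nat) : bool :=
  (#|below g k| < mu)%N && (mu <= #|below g k.+1|)%N.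

Definition refpt := {ffun 'I_m -> 'I_p.+1}.
Definition inRp (a : refpt) : bool := (\sum_(j < m) (a j : nat))%N == p.
Definition rvec (a : refpt) : 'rV[R]_m := \row_j ((a j : nat)%:R / p%:R).

Definition sqnorm (v : 'rV[R]_m) : R := \sum_(j < m) v ord0 j ^+ 2.

(* dist(v, line through r) <= dist(v', line through r') ; the distance of v
   to the line {lam r} is min_lam |v - lam r| (attained), so this says
   min_lam |v - lam r| <= |v' - lam' r'| for every lam'.  Squared norms are
   used (same order). *)
Definition line_closer (v : 'rV[R]_m) (r : 'rV[R]_m) (v' : 'rV[R]_m) (r' : 'rV[R]_m) : Prop :=
  forall lam' : R, exists lam : R, sqnorm (v - lam *: r) <= sqnorm (v' - lam' *: r').

Definition assoc_ok (tb : 'rV[R]_m -> refpt) : Prop :=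
  forall v : 'rV[R]_m, inRp (tb v) /\
    forall r', inRp r' -> line_closer v (rvec (tb v)) v (rvec r').

(* bitwise mutation with rate 1/n: every bit flips with positive probability,
   and with probability 1 iff n <= 1 *)
Definition possible_mut (x y : bs) : Prop :=
  (n <= 1)%N -> forall i, y i != x i.

Definition fvec (x : bs) : {ffun 'I_m -> nat} := [ffun j => f x j].

(* lam u_j lies on the affine hull of the points e_1, ..., e_m *)
Definition onH (e : 'I_m -> {ffun 'I_m -> nat}) (j : 'I_m) (lam : R) : Prop :=
  exists c : 'I_m -> R, \sum_(i < m) c i = 1 /\
    forall k : 'I_m, lam * (k == j)%:R = \sum_(i < m) c i * (e i k)%:R.

Definition linind (e : 'I_m -> {ffun 'I_m -> nat}) : bool :=
  row_free (\matrix_(i < m, k < m) ((e i k)%:R : R)).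

(* extreme points es (None = the point (-oo,...,-oo) of E_0) *)
Definition nad_cond (es : 'I_m -> option {ffun 'I_m -> nat}) (ymaxv : 'I_m -> nat) : Prop :=
  exists e : 'I_m -> {ffun 'I_m -> nat}, (forall i, es i = Some (e i)) /\ linind e /\
    forall j, (exists! lam, onH e j lam) /\
      (forall lam, onH e j lam -> eps <= lam <= (ymaxv j)%:R).

(* the value of y^nad before the final reset step *)
Definition pre_nad (es : 'I_m -> option {ffun 'I_m -> nat}) (ymaxv maxF1v : 'I_m -> nat)
    (y : 'I_m -> R) : Prop :=
  (exists e : 'I_m -> {ffun 'I_m -> nat}, (forall i, es i = Some (e i)) /\ linind e /\
    forall j, (exists! lam, onH e j lam) /\
      (forall lam, onH e j lam -> eps <= lam <= (ymaxv j)%:R) /\ onH e j (y j))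
  \/ (~ nad_cond es ymaxv /\ forall j, y j = (maxF1v j)%:R).

Definition ynad (y : 'I_m -> R) (yminv maxRv : 'I_m -> nat) (j : 'I_m) : R :=
  if y j < (yminv j)%:R + eps then (maxRv j)%:R else y j.

Definition fnorm (y : 'I_m -> R) (yminv maxRv : 'I_m -> nat) (x : bs) : 'rV[R]_m :=
  \row_j (let d := ynad y yminv maxRv j - (yminv j)%:R in
          if d == 0 then 0 else ((f x j)%:R - (yminv j)%:R) / d).

Inductive sel_reach (Y Fi : {set Iidx}) (rp : Iidx -> refpt) (fnv : Iidx -> 'rV[R]_m) :
    (refpt -> nat) -> {set Iidx} -> {set refpt} -> {set Iidx} -> Prop :=
| sel_stop (rho : refpt -> nat) (Ft : {set Iidx}) (Rl : {set refpt}) :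
    (#|Y| + #|Ft|)%N = mu -> sel_reach Y Fi rp fnv rho Ft Rl Ft
| sel_add (rho : refpt -> nat) (Ft : {set Iidx}) (Rl : {set refpt}) (r : refpt) (x : Iidx) (out : {set Iidx}) :
    (#|Y| + #|Ft| < mu)%N -> r \in Rl -> (forall r', r' \in Rl -> (rho r <= rho r')%N) ->
    x \in Fi :\: Ft -> rp x = r ->
    (forall x', x' \in Fi :\: Ft -> rp x' = r -> line_closer (fnv x) (rvec r) (fnv x') (rvec r)) ->
    sel_reach Y Fi rp fnv (fun r' => if r' == r then (rho r).+1 else rho r') (x |: Ft) Rl out ->
    sel_reach Y Fi rp fnv rho Ft Rl out
| sel_drop (rho : refpt -> nat) (Ft : {set Iidx}) (Rl : {set refpt}) (r : refpt) (out : {set Iidx}) :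
    (#|Y| + #|Ft| < mu)%N -> r \in Rl -> (forall r', r' \in Rl -> (rho r <= rho r')%N) ->
    (forall x, x \in Fi :\: Ft -> rp x != r) ->
    sel_reach Y Fi rp fnv rho Ft (Rl :\ r) out ->
    sel_reach Y Fi rp fnv rho Ft Rl out.

Section Run.
Context (tb : 'rV[R]_m -> refpt)
        (P Q : nat -> seq bs)
        (ext : nat -> 'I_m -> option {ffun 'I_m -> nat}) (* ext t = E_(t+1) *)
        (kst : nat -> nat)                          (* kst t = i star - 1 in gen. t *)
        (pre : nat -> 'I_m -> R).

Definition gpop (t : nat) : Iidx -> bs := Rpop (P t) (Q t).
Definition F1 (t : nat) : {set Iidx} := layer (gpop t) 0.
Definition Yt (t : nat) : {set Iidx} := below (gpop t) (kst t).
Definition Fstar (t : nat) : {set Iidx} := layer (gpop t) (kst t).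

(* running extremes (all values are <= fmax, so fmax is a neutral element
   for the minimum over these nonempty families) *)
Definition ymin (t : nat) (j : 'I_m) : nat :=
  (\big[minn/fmax]_(s < t.+1) \big[minn/fmax]_(i : Iidx) f (gpop s i) j)%N.
Definition ymax (t : nat) (j : 'I_m) : nat :=
  (\max_(s < t.+1) \max_(i in F1 s) f (gpop s i) j)%N.
Definition maxF1 (t : nat) (j : 'I_m) : nat := (\max_(i in F1 t) f (gpop t i) j)%N.
Definition maxR (t : nat) (j : 'I_m) : nat := (\max_(i : Iidx) f (gpop t i) j)%N.

Definition fnv (t : nat) (i : Iidx) : 'rV[R]_m :=
  fnorm (pre t) (ymin t) (maxR t) (gpop t i).
Definition rp (t : nat) (i : Iidx) : refpt := tb (fnv t i).

Definition ext_ok (t : nat) (j : 'I_m) : Prop :=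
  (exists2 i, i \in Yt t :|: Fstar t & ext t j = Some (fvec (gpop t i)))
  \/ (t = 0%N /\ ext t j = None)
  \/ (exists t' k, t = t'.+1 /\ ext t j = ext t' k).

Definition selected (t : nat) : Prop :=
  exists out : {set Iidx},
    sel_reach (Yt t) (Fstar t) (rp t) (fnv t)
      (fun r => #|[set i in Yt t | rp t i == r]|) set0 [set r | inRp r] out
    /\ perm_eq (P t.+1) [seq gpop t i | i <- enum (Yt t :|: out)].

Definition is_run : Prop :=
  forall t : nat,
  size (P t) = mu /\ size (Q t) = mu /\
  (forall q, q \in Q t -> exists2 x, x \in P t & possible_mut x q) /\
  is_istar (gpop t) (kst t) /\
  (forall j, ext_ok t j) /\
  pre_nad (ext t) (ymax t) (maxF1 t) (pre t) /\
  selected t.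

Definition same_rp_same_fitness : Prop :=
  forall (t : nat) (i i' : Iidx), i \in F1 t -> i' \in F1 t ->
    rp t i = rp t i' -> forall j : 'I_m, f (gpop t i) j = f (gpop t i') j.
End Run.
End NSGA3.

(* Normalized objective values lie in [0, 1], and since every normalization
   denominator is at most f_max, a difference in an objective value becomes a
   gap of at least 1/f_max in the corresponding normalized coordinate.
   Rounding the normalized vector u, rescaled to coordinate sum p, to a
   reference point shows that the line through the reference point associated
   with u passes within m^(3/2)/p <= 1/(2 f_max) of u.  Two points within
   1/(2 f_max) of one ray with nonnegative direction cannot each beat the other
   by 1/f_max in some coordinate, whereas two points of the first front with
   different fitness vectors are incomparable. *)

From HB Require Import structures.
From mathcomp Require Import all_boot all_order all_algebra.
From mathcomp Require Import ring lra.
Import Order.TTheory GRing.Theory Num.Theory.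
Local Open Scope ring_scope.

Section BoundedFloor.
Variables (R : realDomainType) (p : nat).

(* [R] need not be archimedean, so the floor is sought among [0, ..., p]. *)
Definition bfloor (x : R) : nat := (\max_(k < p.+1 | (k%:R <= x)%R) k)%N.

Lemma bfloor_le_bound x : (bfloor x <= p)%N.
Proof. by apply/bigmax_leqP => k _; rewrite -ltnS. Qed.

Lemma bfloor_le x : 0 <= x -> (bfloor x)%:R <= x.
Proof.
move=> x_ge0; apply: (big_ind (fun k : nat => k%:R <= x)) => // a b ha hb.
by rewrite /maxn; case: ifP.
Qed.

Lemma le_bfloor_nat x k : (k <= p)%N -> k%:R <= x -> (k <= bfloor x)%N.
Proof.
rewrite -ltnS => kp kx.
exact: (@leq_bigmax_cond _ (fun k : 'I_p.+1 => k%:R <= x) val (Ordinal kp)).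
Qed.

Lemma lt_bfloorD1 x : x <= p%:R -> x < (bfloor x)%:R + 1.
Proof.
move=> xp; case: (ltnP (bfloor x) p) => [lt_p | ge_p].
  rewrite ltNge; apply/negP; rewrite natr1 => /(le_bfloor_nat _ _ lt_p).
  by rewrite ltnn.
have -> : bfloor x = p by apply/eqP; rewrite eqn_leq bfloor_le_bound.
by rewrite (le_lt_trans xp) // ltrDl.
Qed.

Lemma le_bfloor : {homo bfloor : x y / x <= y >-> (x <= y)%N}.
Proof.
move=> x y xy; apply/bigmax_leqP => k kx.
by apply: le_bfloor_nat; [rewrite -ltnS | exact: le_trans kx xy].
Qed.

Lemma bfloor_nat k : (k <= p)%N -> bfloor k%:R = k.
Proof.
move=> kp; apply/eqP; rewrite eqn_leq le_bfloor_nat // andbT.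
by rewrite -(ler_nat R) bfloor_le.
Qed.

End BoundedFloor.

Arguments bfloor {R} p x.

(* Rounding the cumulative sums of [p w] keeps the total equal to [p]. *)
Lemma round_to_refpt {R : realDomainType} {m} p (w : 'I_m -> R) :
  (forall i, 0 <= w i) -> \sum_i w i = 1 ->
  exists2 a : refpt m p, inRp a & forall i, `|(a i)%:R - p%:R * w i| < 1.
Proof.
move=> w_ge0 w_sum1.
pose wn k : R := if insub k is Some i then w i else 0.
pose S k := \sum_(0 <= i < k) wn i.
pose A k := bfloor p (p%:R * S k).
have wnE (i : 'I_m) : wn i = w i by rewrite /wn valK.
have wn_ge0 k : 0 <= wn k by rewrite /wn; case: insub.
have S_mono k l : (k <= l)%N -> S k <= S l.
  move=> kl; rewrite /S (big_cat_nat (leq0n k) kl) /= lerDl.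
  exact: sumr_ge0.
have S0 : S 0%N = 0 by rewrite /S big_geq.
have Sm : S m = 1 by rewrite /S big_mkord -w_sum1; apply: eq_bigr.
have SS (i : 'I_m) : S i.+1 = S i + w i by rewrite /S big_nat_recr //= wnE.
have A_mono : {homo A : k l / (k <= l)%N}.
  by move=> k l kl; apply: le_bfloor; rewrite ler_wpM2l // S_mono.
have A_near k : (k <= m)%N -> (A k)%:R <= p%:R * S k < (A k)%:R + 1.
  move=> km; have S_ge0 : 0 <= S k by rewrite -S0 S_mono.
  rewrite bfloor_le ?mulr_ge0 //= lt_bfloorD1 //.
  by rewrite -[leRHS]mulr1 ler_wpM2l // -Sm S_mono.
pose a (i : 'I_m) : 'I_p.+1 := inord (A i.+1 - A i).
have aE i : (a i : nat) = (A i.+1 - A i)%N.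
  by rewrite inordK // ltnS (leq_trans (leq_subr _ _)) ?bfloor_le_bound.
exists [ffun i => a i].
  apply/eqP; under eq_bigr do rewrite ffunE aE.
  rewrite -(big_mkord xpredT (fun k => A k.+1 - A k)%N) telescope_sumn //.
  by rewrite /A Sm S0 mulr1 mulr0 bfloor_nat // (bfloor_nat R _ _ (leq0n p)) subn0.
move=> i; rewrite ffunE aE natrB ?A_mono //.
have := A_near i (ltnW (ltn_ord i)); have := A_near i.+1 (ltn_ord i).
rewrite SS mulrDr => /andP [? ?] /andP [? ?].
rewrite ltr_norml; apply/andP; split; lra.
Qed.

Lemma sqr_coord_le_sqnorm {R : rcfType} {m} (v : 'rV[R]_m) i :
  v ord0 i ^+ 2 <= sqnorm v.
Proof.
rewrite /sqnorm (bigD1 i) //= lerDl.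
by apply: sumr_ge0 => k _; exact: sqr_ge0.
Qed.

Lemma assoc_line_sqdist {R : rcfType} {m p} (u : 'rV[R]_m) (r : refpt m p) :
  (0 < p)%N -> (forall i, 0 <= u ord0 i <= 1) -> 0 < \sum_i u ord0 i ->
  (forall r' : refpt m p, inRp r' -> line_closer u (rvec R r) u (rvec R r')) ->
  exists lam, sqnorm (u - lam *: rvec R r) < m%:R ^+ 3 / p%:R ^+ 2.
Proof.
move=> p_gt0 u01 s_gt0 r_closest.
set s := \sum_i u ord0 i in s_gt0 *.
have p_pos : 0 < (p%:R : R) by rewrite ltr0n.
have [m0 | m_gt0] := posnP m.
  by move: s_gt0; subst m; rewrite /s big_ord0 ltxx.
have s_le_m : s <= m%:R.
  rewrite -[m]card_ord -sumr_const; apply: ler_sum => i _.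
  by case/andP: (u01 i).
have w_sum1 : \sum_i u ord0 i / s = 1 by rewrite -mulr_suml mulfV ?gt_eqF.
have w_ge0 i : 0 <= u ord0 i / s.
  by case/andP: (u01 i) => ui_ge0 _; rewrite divr_ge0 // ltW.
have [a a_in a_near] := round_to_refpt p _ w_ge0 w_sum1.
have [lam lam_closer] := r_closest a a_in s.
exists lam; apply: le_lt_trans lam_closer _.
(* [s *: rvec a] is on the line through [a], within [s / p] of [u] coordinatewise. *)
have err_lt i : (u - s *: rvec R a) ord0 i ^+ 2 < (s / p%:R) ^+ 2.
  set e := (a i)%:R - p%:R * (u ord0 i / s).
  have -> : (u - s *: rvec R a) ord0 i = - (s / p%:R) * e.
    by rewrite !mxE /e; field; rewrite !gt_eqF.
  rewrite exprMn sqrrN -[ltRHS]mulr1 ltr_pM2l ?exprn_gt0 ?divr_gt0 //.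
  by move: (a_near i); rewrite -/e ltr_norml => /andP [? ?]; nra.
apply: (@lt_le_trans _ _ (\sum_(i < m) (s / p%:R) ^+ 2)).
  rewrite /sqnorm; apply: ltr_sum => [|i _]; last exact: err_lt.
  by apply/hasP; exists (Ordinal m_gt0); rewrite ?mem_index_enum.
rewrite sumr_const card_ord -[_ *+ m]mulr_natl.
have -> : m%:R ^+ 3 / p%:R ^+ 2 = m%:R * (m%:R / p%:R) ^+ 2 :> R.
  by rewrite expr_div_n mulrA -exprS.
rewrite ler_wpM2l // lerXn2r ?nnegrE ?divr_ge0 ?(ltW s_gt0) //.
by rewrite ler_pM2r ?invr_gt0.
Qed.

Lemma assoc_near_line {R : rcfType} {m p} (tb : 'rV[R]_m -> refpt m p)
    (u : 'rV[R]_m) (d : R) j :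
  assoc_ok tb -> (forall i, 0 <= u ord0 i <= 1) -> 0 < u ord0 j -> 0 < d ->
  m%:R * Num.sqrt m%:R <= d * p%:R ->
  exists lam, forall i, `|u ord0 i - lam * rvec R (tb u) ord0 i| < d.
Proof.
move=> tb_assoc u01 uj_gt0 d_gt0 p_large.
have m_pos : 0 < (m%:R : R) by rewrite ltr0n (leq_ltn_trans _ (ltn_ord j)).
have p_gt0 : (0 < p)%N.
  rewrite -(ltr0n R) -(pmulr_rgt0 _ d_gt0); apply: lt_le_trans p_large.
  by rewrite mulr_gt0 // sqrtr_gt0.
have s_gt0 : 0 < \sum_i u ord0 i.
  rewrite (bigD1 j) //= ltr_pwDl //.
  by apply: sumr_ge0 => i _; case/andP: (u01 i).
have [tbu_in tbu_closest] := tb_assoc u.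
have [lam lam_dist] := assoc_line_sqdist _ _ p_gt0 u01 s_gt0 tbu_closest.
exists lam => i.
have := le_lt_trans (sqr_coord_le_sqnorm _ i) lam_dist; rewrite !mxE => e_sqr.
rewrite -(ltr_pXn2r (isT : 0 < 2)%N) ?nnegrE ?normr_ge0 ?(ltW d_gt0) //.
rewrite real_normK ?num_real //; apply: (lt_le_trans e_sqr).
have -> : m%:R ^+ 3 = (m%:R * Num.sqrt m%:R) ^+ 2 :> R.
  by rewrite exprMn sqr_sqrtr ?ler0n // -exprSr.
rewrite ler_pdivrMr ?exprn_gt0 ?ltr0n // -exprMn.
by rewrite lerXn2r ?nnegrE ?mulr_ge0 ?sqrtr_ge0 ?ler0n ?(ltW d_gt0).
Qed.

(* Along a ray with nonnegative direction all coordinates grow together, so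
   two points close to it cannot each beat the other by a wide margin. *)
Lemma near_ray_not_crossing {R : realDomainType} {m} {r u v : 'rV[R]_m}
    {d lam lam' : R} j k :
  (forall i, `|u ord0 i - lam * r ord0 i| < d) ->
  (forall i, `|v ord0 i - lam' * r ord0 i| < d) ->
  0 <= r ord0 j -> 0 <= r ord0 k ->
  v ord0 j + d *+ 2 <= u ord0 j -> u ord0 k + d *+ 2 <= v ord0 k -> False.
Proof.
move=> u_near v_near rj_ge0 rk_ge0; rewrite mulr2n => gap_j gap_k.
move: (u_near j) (u_near k) (v_near j) (v_near k); rewrite !ltr_norml.
move=> /andP [? ?] /andP [? ?] /andP [? ?] /andP [? ?].
case: (lerP lam lam') => [le_lam | lt_lam].
  have : lam * r ord0 j <= lam' * r ord0 j by rewrite ler_wpM2r.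
  lra.
have : lam' * r ord0 k <= lam * r ord0 k by rewrite ler_wpM2r // ltW.
lra.
Qed.

Lemma divr_in01 (R : numFieldType) (a d : R) : 0 <= a <= d -> 0 <= a / d <= 1.
Proof.
case/andP => a_ge0 a_le_d; have [-> | d_neq0] := eqVneq d 0.
  by rewrite invr0 mulr0 lexx ler01.
have d_gt0 : 0 < d by rewrite lt_def d_neq0 (le_trans a_ge0 a_le_d).
by rewrite divr_ge0 ?ler_pdivrMr ?mul1r // ltW.
Qed.

Lemma divr_gap (R : realFieldType) (a b d F : R) :
  0 <= b -> b + 1 <= a -> a <= d -> d <= F -> b / d + F^-1 <= a / d.
Proof.
move=> b_ge0 ab ad dF.
have d_gt0 : 0 < d by lra.
have F_gt0 : 0 < F by lra.
have inv_le : F^-1 <= d^-1 by rewrite lef_pV2 ?posrE.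
have inv_le_ab : 1 * d^-1 <= (a - b) * d^-1.
  by apply: ler_wpM2r; rewrite ?invr_ge0 ?(ltW d_gt0) //; lra.
have -> : a / d = b / d + (a - b) / d by rewrite mulrBl addrC subrK.
lra.
Qed.

Lemma pre_nad_le_bound (R : rcfType) m (eps : R) es ymaxv maxF1v y (B : nat) :
  pre_nad eps es ymaxv maxF1v y ->
  (forall j : 'I_m, ymaxv j <= B)%N -> (forall j, maxF1v j <= B)%N ->
  forall j, y j <= B%:R.
Proof.
move=> y_nad ymax_le maxF1_le j.
case: y_nad => [[e [_ [_ hyp]]] | [_ ->]]; last by rewrite ler_nat.
have [_ [/(_ (y j)) onH_bnd onH_y]] := hyp j.
by case/andP: (onH_bnd onH_y) => _ /le_trans; apply; rewrite ler_nat.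
Qed.

Lemma bigminn_le {I : eqType} {r : seq I} {F : I -> nat} {c x} :
  x \in r -> (\big[minn/c]_(i <- r) F i <= F x)%N.
Proof.
elim: r => //= y r IHr; rewrite in_cons big_cons => /predU1P [-> | x_in].
  exact: geq_minl.
exact: leq_trans (geq_minr _ _) (IHr x_in).
Qed.

Lemma F1_better_somewhere {n m} {f : {ffun 'I_n -> bool} -> 'I_m -> nat} {mu}
    {P Q : nat -> seq (bs n)} {t} {i i' : Iidx mu} {j} :
  i \in F1 f mu P Q t -> (f (gpop P Q t i) j < f (gpop P Q t i') j)%N ->
  exists k, (f (gpop P Q t i') k < f (gpop P Q t i) k)%N.
Proof.
rewrite inE => /andP [_ /forallP /(_ i')]; rewrite in_setT /= => not_sdom lt_j.
have : ~~ wdom f (gpop P Q t i') (gpop P Q t i).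
  by apply: contra not_sdom => wdom_i'; rewrite /sdom wdom_i'; apply/existsP; exists j.
by rewrite negb_forall => /existsP [k]; rewrite -ltnNge; exists k.
Qed.

Section NormalizedObjectives.
Context {R : rcfType} {n m : nat} {f : {ffun 'I_n -> bool} -> 'I_m -> nat}
  {mu : nat} {eps : R} {P Q : nat -> seq (bs n)} {pre : nat -> 'I_m -> R}.

Lemma f_le_fmax x j : (f x j <= fmax f)%N.
Proof.
apply: leq_trans (leq_bigmax (F := fun x => \max_(j < m) f x j) x).
exact: (leq_bigmax (F := f x)).
Qed.

Lemma ymin_le t j (i : Iidx mu) : (ymin f mu P Q t j <= f (gpop P Q t i) j)%N.
Proof.
rewrite /ymin; apply: leq_trans (bigminn_le (mem_index_enum ord_max)) _.
exact: bigminn_le (mem_index_enum i).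
Qed.

Lemma le_maxR t j (i : Iidx mu) : (f (gpop P Q t i) j <= maxR f mu P Q t j)%N.
Proof. exact: (leq_bigmax (F := fun i => f (gpop P Q t i) j)). Qed.

Lemma maxR_le_fmax t j : (maxR f mu P Q t j <= fmax f)%N.
Proof. by apply/bigmax_leqP => i _; exact: f_le_fmax. Qed.

Lemma ymax_le_fmax t j : (ymax f mu P Q t j <= fmax f)%N.
Proof. by apply/bigmax_leqP => s _; apply/bigmax_leqP => i _; exact: f_le_fmax. Qed.

Lemma maxF1_le_fmax t j : (maxF1 f mu P Q t j <= fmax f)%N.
Proof. by apply/bigmax_leqP => i _; exact: f_le_fmax. Qed.

Definition ndenom t j : R :=
  ynad eps (pre t) (ymin f mu P Q t) (maxR f mu P Q t) j - (ymin f mu P Q t j)%:R.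

(* [fnorm] returns [0] for a zero denominator, which is what [_ / 0] gives anyway. *)
Lemma fnvE t (i : Iidx mu) j :
  fnv f eps P Q pre t i ord0 j =
  ((f (gpop P Q t i) j)%:R - (ymin f mu P Q t j)%:R) / ndenom t j.
Proof.
rewrite mxE /= -/(ndenom t j).
by case: (ndenom t j =P 0) => [->|]; rewrite ?invr0 ?mulr0.
Qed.

Hypotheses (eps_ge : (fmax f)%:R <= eps) (pre_le : forall t j, pre t j <= (fmax f)%:R).

Lemma ndenom_bounds t j (i : Iidx mu) :
  (f (gpop P Q t i) j)%:R - (ymin f mu P Q t j)%:R <= ndenom t j <= (fmax f)%:R.
Proof.
have := ymin_le t j i; have := le_maxR t j i; have := maxR_le_fmax t j.
rewrite -!(ler_nat R) /ndenom /ynad => maxR_le fi_le ymin_le_fi.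
have := pre_le t j; have := ler0n R (ymin f mu P Q t j).
have := le_trans maxR_le eps_ge.
case: ltP => ? ? ? ?; apply/andP; split; lra.
Qed.

Lemma fnv_in01 t (i : Iidx mu) j : 0 <= fnv f eps P Q pre t i ord0 j <= 1.
Proof.
rewrite fnvE; apply: divr_in01; case/andP: (ndenom_bounds t j i) => -> _.
by rewrite subr_ge0 ler_nat ymin_le.
Qed.

Lemma fnv_gap t (x y : Iidx mu) j :
  (f (gpop P Q t y) j < f (gpop P Q t x) j)%N ->
  fnv f eps P Q pre t y ord0 j + (fmax f)%:R^-1 <= fnv f eps P Q pre t x ord0 j.
Proof.
move=> lt_yx; rewrite !fnvE.
have step : (f (gpop P Q t y) j)%:R + 1 <= (f (gpop P Q t x) j)%:R :> R.
  by rewrite natr1 ler_nat.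
have := ymin_le t j y; rewrite -(ler_nat R) => ymin_y.
have /andP [fx_le fmax_ge] := ndenom_bounds t j x.
by apply: divr_gap => //; lra.
Qed.

Context {p : nat} {tb : 'rV[R]_m -> refpt m p}.
Hypotheses (tb_assoc : assoc_ok tb)
  (p_large : 2%:R * m%:R * Num.sqrt (m%:R) * (fmax f)%:R <= p%:R :> R).

Lemma fmax_gt0 x y j : (f y j < f x j)%N -> 0 < (fmax f)%:R :> R.
Proof.
by move=> lt_yx; rewrite ltr0n (leq_trans _ (f_le_fmax x j)) // (leq_ltn_trans _ lt_yx).
Qed.

Lemma fnv_near_rp_line t (x y : Iidx mu) j :
  (f (gpop P Q t y) j < f (gpop P Q t x) j)%N ->
  exists lam, forall i, `|fnv f eps P Q pre t x ord0 i
    - lam * rvec R (rp f eps tb P Q pre t x) ord0 i| < ((fmax f)%:R *+ 2)^-1.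
Proof.
move=> lt_yx; set F : R := (fmax f)%:R.
have F_gt0 : 0 < F := fmax_gt0 _ _ _ lt_yx.
have F2_gt0 : 0 < F *+ 2 by rewrite (mulrn_wgt0 _ F_gt0).
apply: (assoc_near_line _ _ _ j) => //.
- exact: fnv_in01.
- have := fnv_gap t x y j lt_yx; have /andP [? _] := fnv_in01 t y j.
  have : 0 < F^-1 by rewrite invr_gt0.
  lra.
- by rewrite invr_gt0.
rewrite ler_pdivlMl //.
have -> : F *+ 2 * (m%:R * Num.sqrt m%:R) = 2%:R * m%:R * Num.sqrt m%:R * F.
  by rewrite -mulr_natl; ring.
exact: p_large.
Qed.

Lemma same_rp_not_crossing t (x y : Iidx mu) j k :
  rp f eps tb P Q pre t x = rp f eps tb P Q pre t y ->
  (f (gpop P Q t y) j < f (gpop P Q t x) j)%N ->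
  (f (gpop P Q t x) k < f (gpop P Q t y) k)%N -> False.
Proof.
move=> same_rp gap_j gap_k.
have [lam near_x] := fnv_near_rp_line t x y j gap_j.
have [lam' near_y] := fnv_near_rp_line t y x k gap_k.
rewrite same_rp in near_x.
have r_ge0 i : 0 <= rvec R (rp f eps tb P Q pre t y) ord0 i by rewrite mxE divr_ge0.
have F_gt0 := fmax_gt0 _ _ _ gap_j.
have halves : ((fmax f)%:R *+ 2)^-1 *+ 2 = (fmax f)%:R^-1 :> R.
  by rewrite !mulr2n; field; rewrite !gt_eqF ?addr_gt0.
apply: (near_ray_not_crossing j k near_x near_y (r_ge0 j) (r_ge0 k));
  rewrite halves; exact: fnv_gap.
Qed.

End NormalizedObjectives.

Theorem lemma3 (R : rcfType) (n m : nat) (f : {ffun 'I_n -> bool} -> 'I_m -> nat)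
    (mu p : nat) (eps : R)
    (tb : 'rV[R]_m -> refpt m p)
    (P Q : nat -> seq (bs n))
    (ext : nat -> 'I_m -> option {ffun 'I_m -> nat})
    (kst : nat -> nat) (pre : nat -> 'I_m -> R) :
  (1 <= fmax f)%N ->
  (1 <= mu)%N ->
  (fmax f)%:R <= eps ->
  2%:R * m%:R * Num.sqrt (m%:R) * (fmax f)%:R <= p%:R :> R ->
  assoc_ok tb ->
  is_run f mu eps tb P Q ext kst pre ->
  same_rp_same_fitness f mu eps tb P Q pre.
Proof.
move=> _ _ eps_ge p_large tb_assoc run t i i' i_F1 i'_F1 same_rp j.
have pre_le t' l : pre t' l <= (fmax f)%:R.
  have [_ [_ [_ [_ [_ [pre_nad _]]]]]] := run t'.
  exact: pre_nad_le_bound pre_nad (ymax_le_fmax t') (maxF1_le_fmax t') l.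
have crossing :=
  same_rp_not_crossing eps_ge pre_le tb_assoc p_large (mu := mu) (P := P) (Q := Q).
case: (ltngtP (f (gpop P Q t i) j) (f (gpop P Q t i') j)) => // lt_j.
  have [k lt_k] := F1_better_somewhere i_F1 lt_j.
  by case: (crossing t i' i j k (esym same_rp) lt_j lt_k).
have [k lt_k] := F1_better_somewhere i'_F1 lt_j.
by case: (crossing t i i' j k same_rp lt_j lt_k).
Qed.
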